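(* Let $H\subset G\subset\Sigma_k$ be subgroups and let $A$ be an object of $H\mathrm{ss}_k$. Then there is a natural isomorphism of based $G$-spaces \[ |I_H^G A|\cong G_+\wedge_H|A|. \]
   Context: $\Delta_{\mathrm{inj}}$ is the category of sets $\{0,\dots,n\}$ and monotone injections. $\Sigma_k$ acts on $(\Delta_{\mathrm{inj}}^{\mathrm{op}})^{\times k}$ by permuting factors. For a group $G$ acting on a category $\mathcal C$, $G\ltimes\mathcal C$ has the objects of $\mathcal C$ and morphisms pairs $(\alpha,f)$ with $\alpha\in G$, $f$ a morphism of $\mathcal C$, with domain that of $f$, target $\alpha$ applied to the target of $f$, and composition $(\alpha,f)\circ(\beta,g)=(\alpha\beta,\beta^{-1}(f)\circ g)$. For $H\subset\Sigma_k$, $H\mathrm{ss}_k$ is the category of functors $H\ltimes(\Delta_{\mathrm{inj}}^{\mathrm{op}})^{\times k}\to\mathrm{Set}_*$ (based $k$-fold multisemisimplicial sets with an $H$-''action'' that also permutes multidegrees). For $H\subset G$, $I_H^G:H\mathrm{ss}_k\to G\mathrm{ss}_k$ is left Kan extension along $H\ltimes(\Delta_{\mathrm{inj}}^{\mathrm{op}})^{\times k}\to G\ltimes(\Delta_{\mathrm{inj}}^{\mathrm{op}})^{\times k}$. The geometric realization $|A|$ of $A\in G\mathrm{ss}_k$ is the realization of its underlying $k$-fold multisemisimplicial set; it carries the left $G$-action $\alpha[u_1,\dots,u_k,a]=[u_{\alpha^{-1}(1)},\dots,u_{\alpha^{-1}(k)},(\alpha,\mathrm{id})_*(a)]$ for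 $(u_1,\dots,u_k)\in\Delta^{\mathbf n}$, $a\in A_{\mathbf n}$. *)

From Stdlib Require Import Reals Relations ClassicalEpsilon.
From mathcomp Require Import all_boot all_fingroup.

Set Implicit Arguments.
Unset Strict Implicit.
Unset Printing Implicit Defensive.

Definition eqv {T : Type} (R : T -> T -> Prop) : T -> T -> Prop :=
  clos_refl_sym_trans T R.

Definition Quot {T : Type} (R : T -> T -> Prop) : Type :=
  { C : T -> Prop | exists t, C = eqv R t }.

Definition cls {T : Type} (R : T -> T -> Prop) (t : T) : Quot R :=
  exist _ (eqv R t) (ex_intro _ t erefl).

Definition rep {T : Type} {R : T -> T -> Prop} (q : Quot R) : T :=
  proj1_sig (constructive_indefinite_description _ (proj2_sig q)).

Section MultiSemiSimplicial.
Variable k : nat.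

(* Composition in Sigma_k in the usual (function composition) convention:
   pmul a b = a o b.  (MathComp's product is (a * b) x = b (a x).)       *)
Definition pmul (a b : 'S_k) : 'S_k := (b * a)%g.

(* objects of (Δ_inj^op)^k : multidegrees n = (n_1,...,n_k),
   n_i standing for the set {0,...,n_i} *)
Definition mdeg := 'I_k -> nat.

Definition pact (a : 'S_k) (n : mdeg) : mdeg := fun i => n ((a^-1)%g i).

(* morphisms of Δ_inj : monotone injections {0..m} -> {0..n}
   (= strictly increasing maps) *)
Record injmono (m n : nat) := InjMono {
  im_fun :> 'I_m.+1 -> 'I_n.+1 ;
  im_mono : forall i j : 'I_m.+1, (i < j)%N -> (im_fun i < im_fun j)%N }.

(* a morphism n -> m in (Δ_inj^op)^k : for each i a Δ_inj map [m_i] -> [n_i] *)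
Definition Cmor (n m : mdeg) := forall i : 'I_k, injmono (m i) (n i).

Definition Cid (n : mdeg) : Cmor n n :=
  fun i => @InjMono (n i) (n i) (fun j => j) (fun _ _ h => h).

Lemma Ccomp_mono (n m p : mdeg) (f : Cmor n m) (g : Cmor m p) (i : 'I_k) :
  forall a b : 'I_(p i).+1, (a < b)%N -> (f i (g i a) < f i (g i b))%N.
Proof. by move=> a b hab; apply: im_mono; apply: im_mono. Qed.

Definition Ccomp (n m p : mdeg) (f : Cmor n m) (g : Cmor m p) : Cmor n p :=
  fun i => InjMono (@Ccomp_mono n m p f g i).

Definition Cpact (a : 'S_k) (n m : mdeg) (f : Cmor n m) :
  Cmor (pact a n) (pact a m) := fun i => f ((a^-1)%g i).

(* Objects of H ss_k : functors H ⋉ (Δ_inj^op)^k -> Set_*.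
   Presented by its total set E of simplices, graded by multidegree
   (E_n = {x | deg x = n}, based at bp n); the value of the functor on
   a morphism (a, f) is  act a \o face f  (with act a = (a,id)_* ).
   The fields below are exactly the functoriality / basedness laws;
   face f is only meaningful on E_n (f : Cmor n m) and act a only for
   a in H.                                                             *)
Record mss (H : {set 'S_k}) := MSS {
  ms_E :> Type ;
  ms_deg : ms_E -> mdeg ;
  ms_bp : mdeg -> ms_E ;
  ms_face : forall n m : mdeg, Cmor n m -> ms_E -> ms_E ;
  ms_act : 'S_k -> ms_E -> ms_E ;
  ms_bp_deg : forall n, ms_deg (ms_bp n) = n ;
  ms_face_deg : forall n m (f : Cmor n m) x,
      ms_deg x = n -> ms_deg (ms_face f x) = m ;
  ms_act_deg : forall a x, a \in H -> ms_deg (ms_act a x) = pact a (ms_deg x) ;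
  ms_face_id : forall n x, ms_deg x = n -> ms_face (Cid n) x = x ;
  ms_face_comp : forall n m p (f : Cmor n m) (g : Cmor m p) x,
      ms_deg x = n -> ms_face (Ccomp f g) x = ms_face g (ms_face f x) ;
  ms_act_one : forall x, ms_act 1%g x = x ;
  ms_act_mul : forall a b x, a \in H -> b \in H ->
      ms_act (pmul a b) x = ms_act a (ms_act b x) ;
  ms_act_face : forall a n m (f : Cmor n m) x, a \in H -> ms_deg x = n ->
      ms_act a (ms_face f x) = ms_face (Cpact a f) (ms_act a x) ;
  ms_face_bp : forall n m (f : Cmor n m), ms_face f (ms_bp n) = ms_bp m ;
  ms_act_bp : forall a n, a \in H -> ms_act a (ms_bp n) = ms_bp (pact a n)
}.

(* A natural transformation A => B restricted along K ⋉ C (K a group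
   acting on both): a morphism of K ss_k from A to B (B viewed in K ss_k
   by restriction, when B is in G ss_k with K ⊆ G).                    *)
Definition is_hom (K H1 H2 : {set 'S_k}) (A : mss H1) (B : mss H2)
    (phi : A -> B) : Prop :=
  [/\ forall x, ms_deg (phi x) = ms_deg x,
      forall n m (f : Cmor n m) x, ms_deg x = n ->
        phi (ms_face f x) = ms_face f (phi x),
      forall a x, a \in K -> phi (ms_act a x) = ms_act a (phi x)
    & forall n, phi (ms_bp A n) = ms_bp B n].

(* (B, eta) is a left Kan extension I_H^G A of A along
   H ⋉ (Δ_inj^op)^k -> G ⋉ (Δ_inj^op)^k, i.e. it is universal among
   morphisms from A to restrictions of objects of G ss_k.              *)
Definition is_lan (H G : {set 'S_k}) (A : mss H) (B : mss G) (eta : A -> B)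
  : Prop :=
  is_hom H eta /\
  forall (C : mss G) (psi : A -> C), is_hom H psi ->
    exists chi : B -> C,
      (is_hom G chi /\ forall x, chi (eta x) = psi x) /\
      forall chi' : B -> C, is_hom G chi' -> (forall x, chi' (eta x) = psi x) ->
        forall y, chi' y = chi y.

(* coordinates: u i j is the j-th barycentric coordinate of the i-th factor *)
Definition coord := 'I_k -> nat -> R.

Definition simp (n : mdeg) (u : coord) : Prop :=
  (forall i j, Rle 0 (u i j)) /\
  (forall i j, (n i < j)%N -> u i j = R0) /\
  (forall i, sum_f_R0 (u i) (n i) = R1).

(* the map Δ^m -> Δ^n induced by f : n -> m in (Δ_inj^op)^k *)
Definition cof (n m : mdeg) (f : Cmor n m) (u : coord) : coord :=
  fun i j => match [pick l : 'I_(m i).+1 | nat_of_ord (f i l) == j] with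
             | Some l => u i (nat_of_ord l)
             | None => R0
             end.

Definition deg0 : mdeg := fun _ => 0%N.
Definition vert0 : coord := fun _ j => if j == 0%N then R1 else R0.

Definition simp_open (n : mdeg) (W : coord -> Prop) : Prop :=
  forall u, simp n u -> W u ->
    exists eps, Rlt 0 eps /\
      forall v, simp n v ->
        (forall i j, (j <= n i)%N -> Rlt (Rabs (v i j - u i j)) eps) -> W v.

Section Realization.
Variables (H : {set 'S_k}) (A : mss H).

(* identifications: face relations, collapse of the basepoint simplices;
   pairs (x,u) with u not in Δ^{deg x} are not points of the
   realization and are (harmlessly) sent to the basepoint.             *)
Inductive realRel : A * coord -> A * coord -> Prop :=
| rr_face n m (f : Cmor n m) (x : A) u :
    ms_deg x = n -> simp m u -> realRel (ms_face f x, u) (x, cof f u)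
| rr_base n m u v :
    simp n u -> simp m v -> realRel (ms_bp A n, u) (ms_bp A m, v)
| rr_junk (x : A) u :
    ~ simp (ms_deg x) u -> realRel (x, u) (ms_bp A deg0, vert0).

Definition Real : Type := Quot realRel.
Definition rcls (x : A) (u : coord) : Real := cls realRel (x, u).
Definition realBase : Real := rcls (ms_bp A deg0) vert0.

Definition realOpen (V : Real -> Prop) : Prop :=
  forall x : A, simp_open (ms_deg x) (fun u => V (rcls x u)).

Definition pactU (a : 'S_k) (u : coord) : coord := fun i => u ((a^-1)%g i).

Definition realAct (a : 'S_k) (q : Real) : Real :=
  rcls (ms_act a (rep q).1) (pactU a (rep q).2).
End Realization.

Definition realMap (H1 H2 : {set 'S_k}) (A : mss H1) (B : mss H2)
    (phi : A -> B) (q : Real A) : Real B :=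
  rcls (A:=B) (phi (rep q).1) (rep q).2.

(* G_+ ∧_H |A| : (G x |A|) / ( (g h, z) ~ (g, h z), G x {*} ~ * )      *)
Section Smash.
Variables (G H : {set 'S_k}) (A : mss H).

(* pairs (g, z) with g outside G are not points and go to the basepoint *)
Inductive smashRel : 'S_k * Real A -> 'S_k * Real A -> Prop :=
| sm_H g h z : g \in G -> h \in H ->
    smashRel (pmul g h, z) (g, realAct h z)
| sm_base g g' : g \in G -> g' \in G ->
    smashRel (g, realBase A) (g', realBase A)
| sm_junk g z : g \notin G -> smashRel (g, z) (1%g, realBase A).

Definition Smash : Type := Quot smashRel.
Definition scls (g : 'S_k) (z : Real A) : Smash := cls smashRel (g, z).
Definition smashBase : Smash := scls 1%g (realBase A).

(* quotient topology of G x |A| with G discrete *)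
Definition smashOpen (V : Smash -> Prop) : Prop :=
  forall g, g \in G -> realOpen (fun z => V (scls g z)).

Definition smashAct (a : 'S_k) (s : Smash) : Smash :=
  scls (pmul a (rep s).1) (rep s).2.
End Smash.

Definition smashMap (G H : {set 'S_k}) (A A' : mss H) (phi : A -> A')
    (s : Smash G A) : Smash G A' :=
  scls G (A:=A') (rep s).1 (realMap phi (rep s).2).

Definition based_G_iso (G H : {set 'S_k}) (B : mss G) (A : mss H)
    (theta : Real B -> Smash G A) : Prop :=
  [/\ bijective theta,
      forall V, smashOpen V -> realOpen (fun q => V (theta q)),
      forall U, realOpen U -> smashOpen (fun s => exists q, U q /\ theta q = s),
      theta (realBase B) = smashBase G A
    & forall a q, a \in G -> theta (realAct a q) = smashAct a (theta q)].

End MultiSemiSimplicial.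

(* Every simplex of a left Kan extension [B] of [A] along
   [H ⋉ (Δ_inj^op)^k -> G ⋉ (Δ_inj^op)^k] is a translate [g eta(x)] with [g] in [G],
   and [g1 eta(x1) = g eta(x)] forces [g1 = g h], [x1 = h^-1 x] for some [h] in [H]
   unless both simplices are basepoints; both facts come from the universal property.
   Hence [[g eta(x), u] |-> [g, [x, g^-1 u]]] is a well-defined map
   [|B| -> G_+ ∧_H |A|], inverse to [[g, z] |-> g |eta|(z)]; it is [G]-equivariant,
   natural, and a homeomorphism since on every simplex it only permutes coordinates. *)

From Stdlib Require Import Reals Relations ClassicalEpsilon.
From mathcomp Require Import all_boot all_fingroup.
From Stdlib Require Import FunctionalExtensionality ProofIrrelevance PropExtensionality.

Set Implicit Arguments.
Unset Strict Implicit.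
Unset Printing Implicit Defensive.

Section Quotient.
Variables (T : Type) (R : T -> T -> Prop).

Lemma cls_eq t t' : eqv R t t' -> cls R t = cls R t'.
Proof.
move=> e; apply: subset_eq_compat.
apply: functional_extensionality => s; apply: propositional_extensionality.
split=> h; [exact: rst_trans (rst_sym _ _ _ _ e) h | exact: rst_trans e h].
Qed.

Lemma rep_spec (q : Quot R) : proj1_sig q = eqv R (rep q).
Proof.
exact: (proj2_sig (constructive_indefinite_description _ (proj2_sig q))).
Qed.

Lemma cls_rep (q : Quot R) : cls R (rep q) = q.
Proof.
move: (rep_spec q); case: q => C p /= E.
by apply: subset_eq_compat; apply: esym.
Qed.

Lemma rep_cls t : eqv R (rep (cls R t)) t.
Proof.
apply: rst_sym; change (proj1_sig (cls R t) (rep (cls R t))).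
rewrite rep_spec; exact: rst_refl.
Qed.

Lemma eqv_resp (X : Type) (F : T -> X) :
  (forall a b, R a b -> F a = F b) -> forall a b, eqv R a b -> F a = F b.
Proof. by move=> hF a b; elim=> [x y /hF | | x y _ -> | x y z _ -> _ ->]. Qed.

Lemma resp_rep_cls (X : Type) (F : T -> X) :
  (forall a b, R a b -> F a = F b) -> forall t, F (rep (cls R t)) = F t.
Proof. by move=> hF t; apply: eqv_resp hF _ _ (rep_cls t). Qed.

End Quotient.

Section PermAction.
Variable k : nat.
Implicit Types (a b c g h : 'S_k) (n m : mdeg k) (u : coord k).

Lemma pmulA a b c : pmul a (pmul b c) = pmul (pmul a b) c.
Proof. by rewrite /pmul mulgA. Qed.
Lemma pmulV a b : (pmul a b)^-1%g = pmul b^-1%g a^-1%g.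
Proof. by rewrite /pmul invMg. Qed.
Lemma pmul1g a : pmul 1 a = a.
Proof. by rewrite /pmul mulg1. Qed.
Lemma pmulg1 a : pmul a 1 = a.
Proof. by rewrite /pmul mul1g. Qed.
Lemma pmulVg a : pmul a^-1%g a = 1%g.
Proof. by rewrite /pmul mulgV. Qed.
Lemma pmulgV a : pmul a a^-1%g = 1%g.
Proof. by rewrite /pmul mulVg. Qed.
Lemma pmulE a b i : pmul a b i = a (b i).
Proof. by rewrite /pmul permM. Qed.

Lemma pactM a b n : pact a (pact b n) = pact (pmul a b) n.
Proof. by apply: functional_extensionality => i; rewrite /pact pmulV pmulE. Qed.
Lemma pact1 n : pact 1 n = n.
Proof. by apply: functional_extensionality => i; rewrite /pact invg1 perm1. Qed.
Lemma pactK a n : pact a^-1 (pact a n) = n.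
Proof. by rewrite pactM pmulVg pact1. Qed.
Lemma pactKV a n : pact a (pact a^-1 n) = n.
Proof. by rewrite pactM pmulgV pact1. Qed.

Lemma pactUM a b u : pactU a (pactU b u) = pactU (pmul a b) u.
Proof. by apply: functional_extensionality => i; rewrite /pactU pmulV pmulE. Qed.
Lemma pactU1 u : pactU 1 u = u.
Proof. by apply: functional_extensionality => i; rewrite /pactU invg1 perm1. Qed.
Lemma pactUK a u : pactU a^-1 (pactU a u) = u.
Proof. by rewrite pactUM pmulVg pactU1. Qed.
Lemma pactUKV a u : pactU a (pactU a^-1 u) = u.
Proof. by rewrite pactUM pmulgV pactU1. Qed.

Lemma pactU_cof a n m (f : Cmor n m) u :
  pactU a (cof f u) = cof (Cpact a f) (pactU a u).
Proof. by []. Qed.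

Lemma simp_pactU a n u : simp n u -> simp (pact a n) (pactU a u).
Proof. by case=> h1 [h2 h3]; split; [|split] => i; [apply: h1 | apply: h2 | apply: h3]. Qed.

Lemma simp_pactU_inv a n u : simp (pact a n) (pactU a u) -> simp n u.
Proof. by move/(simp_pactU a^-1); rewrite pactK pactUK. Qed.

Lemma vert0_simp : simp (@deg0 k) (@vert0 k).
Proof.
split; [|split] => i.
- by move=> j; rewrite /vert0; case: (j == 0)%N; [apply: Rle_0_1 | apply: Rle_refl].
- by case.
- by [].
Qed.

(* Faces only see the underlying maps of a [Cmor]; this absorbs the transport
   along the index equalities produced by [Cpact]. *)
Lemma ms_face_ext (K : {set 'S_k}) (A : mss K) n m n' m'
    (f : Cmor n m) (f' : Cmor n' m') (x : A) :
  n = n' -> m = m' ->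
  (forall i (l : 'I_(m i).+1) (l' : 'I_(m' i).+1),
      (l : nat) = l' -> (f i l : nat) = f' i l') ->
  ms_face f x = ms_face f' x.
Proof.
move=> en em; subst n' m' => hf; congr ms_face.
apply: functional_extensionality_dep => i.
move: (hf i); case: (f i) => F1 p1; case: (f' i) => F2 p2 /= h.
have eF : F1 = F2 by apply: functional_extensionality => l; apply: val_inj; apply: h.
by subst F2; congr InjMono; apply: proof_irrelevance.
Qed.

Lemma Cmor_index n m (f : Cmor n m) i j (e : i = j)
    (l : 'I_(m i).+1) (l' : 'I_(m j).+1) :
  (l : nat) = l' -> (f i l : nat) = f j l'.
Proof. by subst j => h; have -> : l = l' by apply: val_inj. Qed.

Lemma ms_face_CpactM (K : {set 'S_k}) (A : mss K) a b n m (f : Cmor n m) (x : A) :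
  ms_face (Cpact a (Cpact b f)) x = ms_face (Cpact (pmul a b) f) x.
Proof.
apply: ms_face_ext; [exact: pactM | exact: pactM |] => i l l' e.
by apply: (Cmor_index f _ e); rewrite pmulV pmulE.
Qed.

Lemma ms_face_CpactKV (K : {set 'S_k}) (A : mss K) g n m (f : Cmor n m) (x : A) :
  ms_face (Cpact g (Cpact g^-1 f)) x = ms_face f x.
Proof.
apply: ms_face_ext; [exact: pactKV | exact: pactKV |] => i l l' e.
by apply: (Cmor_index f _ e); rewrite invgK permKV.
Qed.

Lemma simp_open_pact a d d' (W W' : coord k -> Prop) :
  d' = pact a d -> (forall u, W' u <-> W (pactU a^-1 u)) ->
  simp_open d W -> simp_open d' W'.
Proof.
move=> -> eW hW u hu /eW Wu.
have hv v : simp (pact a d) v -> simp d (pactU a^-1 v).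
  by move=> hv; rewrite -(pactK a d); apply: simp_pactU.
have [eps [heps close_W]] := hW _ (hv _ hu) Wu.
exists eps; split=> // v hv' close; apply/eW; apply: close_W; first exact: hv.
by move=> i j hj; apply: close; rewrite /pact permKV.
Qed.

End PermAction.

Section Homomorphism.
Variables (k : nat) (K K1 K2 : {set 'S_k}) (A : mss K1) (B : mss K2) (phi : A -> B).
Hypothesis hphi : is_hom K phi.

Lemma hom_deg x : ms_deg (phi x) = ms_deg x.
Proof. by case: hphi. Qed.
Lemma hom_face n m (f : Cmor n m) x : ms_deg x = n -> phi (ms_face f x) = ms_face f (phi x).
Proof. by case: hphi => _ hf _ _; apply: hf. Qed.
Lemma hom_act a x : a \in K -> phi (ms_act a x) = ms_act a (phi x).
Proof. by case: hphi => _ _ ha _; apply: ha. Qed.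
Lemma hom_bp n : phi (ms_bp A n) = ms_bp B n.
Proof. by case: hphi. Qed.

Lemma hom_deg_act g x : g \in K2 -> ms_deg (ms_act g (phi x)) = pact g (ms_deg x).
Proof. by move=> hg; rewrite ms_act_deg // hom_deg. Qed.

Lemma hom_face_act g n m (f : Cmor n m) x : g \in K2 ->
  ms_deg x = pact g^-1%g n ->
  ms_face f (ms_act g (phi x)) = ms_act g (phi (ms_face (Cpact g^-1%g f) x)).
Proof.
move=> hg hx; rewrite hom_face // ms_act_face ?hom_deg //.
by rewrite ms_face_CpactKV.
Qed.

End Homomorphism.

Section Realization.
Variables (k : nat) (K : {set 'S_k}) (A : mss K).

Lemma rcls_face n m (f : Cmor n m) (x : A) u :
  ms_deg x = n -> simp m u -> rcls (ms_face f x) u = rcls x (cof f u).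
Proof. by move=> hx hu; apply/cls_eq/rst_step/rr_face. Qed.

Lemma rcls_junk (x : A) u : ~ simp (ms_deg x) u -> rcls x u = realBase A.
Proof. by move=> hu; apply/cls_eq/rst_step/rr_junk. Qed.

Lemma rcls_bp n u : rcls (ms_bp A n) u = realBase A.
Proof.
have [hu | hu] := classic (simp n u).
- by apply/cls_eq/rst_step/rr_base; [apply: hu | apply: vert0_simp].
- by apply: rcls_junk; rewrite ms_bp_deg.
Qed.

Lemma rcls_rep (q : Real A) : rcls (rep q).1 (rep q).2 = q.
Proof. by rewrite /rcls -surjective_pairing cls_rep. Qed.

Lemma realAct_rcls a (x : A) u : a \in K ->
  realAct a (rcls x u) = rcls (ms_act a x) (pactU a u).
Proof.
move=> ha; apply: (resp_rep_cls (F := fun t => rcls (ms_act a t.1) (pactU a t.2))).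
move=> t t'; case=> [n m f y w hy hw | n m w v _ _ | y w hw] /=.
- rewrite ms_act_face // pactU_cof.
  by apply: rcls_face; [rewrite ms_act_deg // hy | apply: simp_pactU].
- by rewrite !ms_act_bp // !rcls_bp.
- rewrite ms_act_bp // rcls_bp rcls_junk //.
  by rewrite ms_act_deg // => /simp_pactU_inv.
Qed.

End Realization.

Lemma realMap_rcls k (K K1 K2 : {set 'S_k}) (A : mss K1) (B : mss K2) (phi : A -> B) :
  is_hom K phi -> forall x u, realMap phi (rcls x u) = rcls (phi x) u.
Proof.
move=> hphi x u; apply: (resp_rep_cls (F := fun t => rcls (phi t.1) t.2)).
move=> t t'; case=> [n m f y w hy hw | n m w v _ _ | y w hw] /=.
- by rewrite (hom_face hphi) //; apply: rcls_face; rewrite ?(hom_deg hphi).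
- by rewrite !(hom_bp hphi) !rcls_bp.
- by rewrite (hom_bp hphi) rcls_bp rcls_junk // (hom_deg hphi).
Qed.

Section SmashProduct.
Variables (k : nat) (H G : {group 'S_k}).

Lemma scls_base (A : mss H) g : g \in G -> scls G g (realBase A) = smashBase G A.
Proof. by move=> hg; apply/cls_eq/rst_step/sm_base. Qed.

Lemma scls_H (A : mss H) g h (z : Real A) : g \in G -> h \in H ->
  scls G (pmul g h) z = scls G g (realAct h z).
Proof. by move=> hg hh; apply/cls_eq/rst_step/sm_H. Qed.

Lemma scls_junk (A : mss H) g (z : Real A) : g \notin G -> scls G g z = smashBase G A.
Proof. by move=> hg; apply/cls_eq/rst_step/sm_junk. Qed.

Lemma scls_rep (A : mss H) (s : Smash G A) : scls G (rep s).1 (rep s).2 = s.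
Proof. by rewrite /scls -surjective_pairing cls_rep. Qed.

Lemma smashAct_scls (A : mss H) a g (z : Real A) : a \in G ->
  smashAct a (scls G g z) = scls G (pmul a g) z.
Proof.
move=> ha; apply: (resp_rep_cls (F := fun p => scls G (pmul a p.1) p.2)).
move=> p p'; case=> [g1 h z1 hg hh | g1 g2 hg1 hg2 | g1 z1 hg] /=.
- by rewrite pmulA scls_H // /pmul groupM.
- by rewrite !scls_base // /pmul groupM.
- by rewrite scls_junk ?pmulg1 ?scls_base // /pmul groupMr.
Qed.

Lemma smashMap_scls (A A' : mss H) (phi : A -> A') : is_hom H phi ->
  forall g (z : Real A), smashMap phi (scls G g z) = scls G g (realMap phi z).
Proof.
move=> hphi g z.
have phi_base : realMap phi (realBase A) = realBase A'.
  by rewrite /realBase (realMap_rcls hphi) (hom_bp hphi) rcls_bp.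
apply: (resp_rep_cls (F := fun p => scls G p.1 (realMap phi p.2))).
move=> p p'; case=> [g1 h z1 hg hh | g1 g2 hg1 hg2 | g1 z1 hg] /=.
- rewrite scls_H // -(rcls_rep z1) realAct_rcls // !(realMap_rcls hphi).
  by rewrite realAct_rcls // (hom_act hphi).
- by rewrite phi_base !scls_base.
- by rewrite scls_junk // phi_base scls_base.
Qed.

End SmashProduct.

(* The double of [B] along a sub-object [S]: two copies of [B] glued along [S].
   The flag [true] marks the second copy; it is normalised away on [S]. *)
Section Double.
Variables (k : nat) (G : {set 'S_k}) (B : mss G) (S : B -> Prop).
Hypothesis S_face : forall n m (f : Cmor n m) y, ms_deg y = n -> S y -> S (ms_face f y).
Hypothesis S_act : forall a y, a \in G -> S y -> S (ms_act a y).
Implicit Types (a : 'S_k) (n m : mdeg k) (y : B).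

Definition inS y : bool := if excluded_middle_informative (S y) then true else false.

Lemma inSP y : reflect (S y) (inS y).
Proof. by rewrite /inS; case: excluded_middle_informative => h; constructor. Qed.

Lemma inS_face n m (f : Cmor n m) y : ms_deg y = n -> inS y -> inS (ms_face f y).
Proof. by move=> hy /inSP h; apply/inSP; apply: S_face h. Qed.

Lemma inS_act a y : a \in G -> inS y -> inS (ms_act a y).
Proof. by move=> ha /inSP h; apply/inSP; apply: S_act h. Qed.

Definition double_E := {p : B * bool | p.2 ==> ~~ inS p.1}.

Lemma dbl_flag_ok y b : (y, b && ~~ inS y).2 ==> ~~ inS (y, b && ~~ inS y).1.
Proof. by case: b; case: (inS y). Qed.

Definition dbl y (b : bool) : double_E := exist _ (y, b && ~~ inS y) (dbl_flag_ok y b).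

Lemma dbl_eq y y' b b' :
  y = y' -> b && ~~ inS y = b' && ~~ inS y' -> dbl y b = dbl y' b'.
Proof. by move=> <- eb; apply: subset_eq_compat; rewrite eb. Qed.

Lemma dbl_val (p : double_E) : dbl (proj1_sig p).1 (proj1_sig p).2 = p.
Proof.
case: p => [[y b] /= hp]; apply: subset_eq_compat => /=.
by move: hp; case: b => //= ->.
Qed.

Lemma dbl_flag_face n m (f : Cmor n m) y b : ms_deg y = n ->
  b && ~~ inS (ms_face f y) = (b && ~~ inS y) && ~~ inS (ms_face f y).
Proof. by move=> hy; case e: (inS y); rewrite ?(inS_face f hy e) ?andbF ?andbT. Qed.

Lemma dbl_flag_act a y b : a \in G ->
  b && ~~ inS (ms_act a y) = (b && ~~ inS y) && ~~ inS (ms_act a y).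
Proof. by move=> ha; case e: (inS y); rewrite ?(inS_act ha e) ?andbF ?andbT. Qed.

Definition dbl_deg (p : double_E) := ms_deg (proj1_sig p).1.
Definition dbl_bp n := dbl (ms_bp B n) false.
Definition dbl_face n m (f : Cmor n m) (p : double_E) :=
  dbl (ms_face f (proj1_sig p).1) (proj1_sig p).2.
Definition dbl_act a (p : double_E) := dbl (ms_act a (proj1_sig p).1) (proj1_sig p).2.

Lemma dbl_bp_deg n : dbl_deg (dbl_bp n) = n.
Proof. exact: ms_bp_deg. Qed.
Lemma dbl_face_deg n m (f : Cmor n m) p : dbl_deg p = n -> dbl_deg (dbl_face f p) = m.
Proof. exact: ms_face_deg. Qed.
Lemma dbl_act_deg a p : a \in G -> dbl_deg (dbl_act a p) = pact a (dbl_deg p).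
Proof. exact: ms_act_deg. Qed.
Lemma dbl_face_id n p : dbl_deg p = n -> dbl_face (Cid n) p = p.
Proof. by move=> hp; rewrite /dbl_face ms_face_id // dbl_val. Qed.

Lemma dbl_face_comp n m q (f : Cmor n m) (g : Cmor m q) p : dbl_deg p = n ->
  dbl_face (Ccomp f g) p = dbl_face g (dbl_face f p).
Proof.
case: p => [[y b] /= hp] hy; apply: dbl_eq => /=; rewrite ms_face_comp //.
exact: (dbl_flag_face _ _ (ms_face_deg f hy)).
Qed.

Lemma dbl_act_one p : dbl_act 1 p = p.
Proof. by rewrite /dbl_act ms_act_one dbl_val. Qed.

Lemma dbl_act_mul a b p : a \in G -> b \in G ->
  dbl_act (pmul a b) p = dbl_act a (dbl_act b p).
Proof.
case: p => [[y c] /= hp] ha hb; apply: dbl_eq => /=; rewrite ms_act_mul //.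
exact: dbl_flag_act.
Qed.

Lemma dbl_act_face a n m (f : Cmor n m) p : a \in G -> dbl_deg p = n ->
  dbl_act a (dbl_face f p) = dbl_face (Cpact a f) (dbl_act a p).
Proof.
case: p => [[y c] /= hp] ha; rewrite /dbl_deg /= => hy.
apply: dbl_eq => /=; first exact: ms_act_face.
rewrite -dbl_flag_act // ms_act_face // -dbl_flag_face //.
by rewrite ms_act_deg // hy.
Qed.

Lemma dbl_face_bp n m (f : Cmor n m) : dbl_face f (dbl_bp n) = dbl_bp m.
Proof. by rewrite /dbl_face /dbl_bp /= ms_face_bp. Qed.
Lemma dbl_act_bp a n : a \in G -> dbl_act a (dbl_bp n) = dbl_bp (pact a n).
Proof. by move=> ha; rewrite /dbl_act /dbl_bp /= ms_act_bp. Qed.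

Definition double : mss G :=
  @MSS k G double_E dbl_deg dbl_bp dbl_face dbl_act dbl_bp_deg dbl_face_deg
    dbl_act_deg dbl_face_id dbl_face_comp dbl_act_one dbl_act_mul dbl_act_face
    dbl_face_bp dbl_act_bp.

Lemma dbl_lower_hom : is_hom G (fun y => dbl y false : double).
Proof. by []. Qed.

Lemma dbl_upper_hom : (forall n, S (ms_bp B n)) -> is_hom G (fun y => dbl y true : double).
Proof.
move=> S_bp; split=> //.
- by move=> n m f y hy; apply: dbl_eq => //; apply: dbl_flag_face.
- by move=> a y ha; apply: dbl_eq => //; apply: dbl_flag_act.
- by move=> n; apply: dbl_eq => //=; have /inSP -> := S_bp n.
Qed.

Lemma dbl_upper_lower y : dbl y true = dbl y false -> S y.
Proof. by move/(f_equal (fun p : double_E => (proj1_sig p).2)) => /= /negbFE /inSP. Qed.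

End Double.

(* The coinduced object: [H]-equivariant families [g |-> F g] of simplices of
   [A], indexed by all of [Sigma_k]; [G] acts by translating the index. *)
Section Coinduction.
Variables (k : nat) (H : {group 'S_k}) (G : {set 'S_k}) (A : mss H).
Implicit Types (a g h : 'S_k) (n m : mdeg k).

Definition coind_family (F : 'S_k -> A) : Prop :=
  (forall g h, h \in H -> F (pmul g h) = ms_act h^-1%g (F g)) /\
  (forall g, ms_deg (F g) = pact g^-1%g (ms_deg (F 1%g))).

Definition coind_E := {F : 'S_k -> A | coind_family F}.

Lemma coind_eq (F1 F2 : coind_E) : proj1_sig F1 = proj1_sig F2 -> F1 = F2.
Proof. by case: F1 F2 => [f1 p1] [f2 p2] /= e; apply: subset_eq_compat. Qed.

Definition coind_deg (F : coind_E) := ms_deg (proj1_sig F 1%g).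

Lemma coind_degE (F : coind_E) g : ms_deg (proj1_sig F g) = pact g^-1%g (coind_deg F).
Proof. by case: F => F [hH hdeg]; apply: hdeg. Qed.

Lemma coind_bp_family n : coind_family (fun g => ms_bp A (pact g^-1%g n)).
Proof.
split=> [g h hh | g]; last by rewrite !ms_bp_deg invg1 pact1.
by rewrite ms_act_bp ?groupV // pactM pmulV.
Qed.
Definition coind_bp n : coind_E := exist _ _ (coind_bp_family n).

Lemma coind_act_family a (F : coind_E) : coind_family (fun g => proj1_sig F (pmul a^-1%g g)).
Proof.
case: F => F [hH hdeg]; split=> [g h hh | g] /=; first by rewrite pmulA hH.
by rewrite hdeg (hdeg (pmul _ _)) pactM !pmulV !invgK invg1 pmul1g.
Qed.
Definition coind_act a (F : coind_E) : coind_E := exist _ _ (coind_act_family a F).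

Lemma coind_face_family n m (f : Cmor n m) (F : coind_E) : coind_deg F = n ->
  coind_family (fun g => ms_face (Cpact g^-1%g f) (proj1_sig F g)).
Proof.
move=> hF; have hd g : ms_deg (proj1_sig F g) = pact g^-1%g n by rewrite coind_degE hF.
case: F hd {hF} => F [hH _] /= hd; split=> [g h hh | g].
- by rewrite hH // ms_act_face ?groupV // ms_face_CpactM pmulV.
- by rewrite !(ms_face_deg _ (hd _)) invg1 pact1.
Qed.

(* Faces of the wrong degree are junk; they are sent to a basepoint. *)
Definition coind_face n m (f : Cmor n m) (F : coind_E) : coind_E :=
  match excluded_middle_informative (coind_deg F = n) with
  | left e => exist _ _ (coind_face_family f e)
  | right _ => coind_bp m
  end.

Lemma coind_faceE n m (f : Cmor n m) (F : coind_E) : coind_deg F = n ->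
  proj1_sig (coind_face f F) = fun g => ms_face (Cpact g^-1%g f) (proj1_sig F g).
Proof. by rewrite /coind_face => e; case: excluded_middle_informative. Qed.

Lemma coind_bp_deg n : coind_deg (coind_bp n) = n.
Proof. by rewrite /coind_deg /= ms_bp_deg invg1 pact1. Qed.

Lemma coind_face_deg n m (f : Cmor n m) F : coind_deg F = n -> coind_deg (coind_face f F) = m.
Proof.
move=> e; rewrite /coind_deg coind_faceE //=.
have hd : ms_deg (proj1_sig F 1%g) = pact 1^-1%g n by rewrite coind_degE e.
by rewrite (ms_face_deg _ hd) invg1 pact1.
Qed.

Lemma coind_act_deg a F : a \in G -> coind_deg (coind_act a F) = pact a (coind_deg F).
Proof. by rewrite /coind_deg /= coind_degE pmulg1 invgK. Qed.

Lemma coind_face_id n F : coind_deg F = n -> coind_face (Cid n) F = F.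
Proof.
move=> e; apply: coind_eq; rewrite coind_faceE //.
apply: functional_extensionality => g.
rewrite (@ms_face_ext _ _ _ _ _ _ _ _ (Cid (pact g^-1%g n))) //.
by rewrite ms_face_id // coind_degE e.
Qed.

Lemma coind_face_comp n m p (f : Cmor n m) (g : Cmor m p) F : coind_deg F = n ->
  coind_face (Ccomp f g) F = coind_face g (coind_face f F).
Proof.
move=> e; apply: coind_eq; rewrite coind_faceE // coind_faceE ?coind_face_deg //.
rewrite coind_faceE //; apply: functional_extensionality => c.
rewrite -ms_face_comp ?coind_degE ?e //.
by apply: ms_face_ext => // i l l' el /=; have -> : l = l' :> 'I__ by apply: val_inj.
Qed.

Lemma coind_act_one F : coind_act 1 F = F.
Proof.
by apply: coind_eq; apply: functional_extensionality => g /=; rewrite invg1 pmul1g.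
Qed.

Lemma coind_act_mul a b F : a \in G -> b \in G ->
  coind_act (pmul a b) F = coind_act a (coind_act b F).
Proof.
by move=> _ _; apply: coind_eq; apply: functional_extensionality => g /=; rewrite pmulV pmulA.
Qed.

Lemma coind_act_face a n m (f : Cmor n m) F : a \in G -> coind_deg F = n ->
  coind_act a (coind_face f F) = coind_face (Cpact a f) (coind_act a F).
Proof.
move=> ha e; apply: coind_eq; rewrite coind_faceE; last by rewrite coind_act_deg // e.
rewrite /= coind_faceE //; apply: functional_extensionality => g.
by rewrite ms_face_CpactM pmulV invgK.
Qed.

Lemma coind_face_bp n m (f : Cmor n m) : coind_face f (coind_bp n) = coind_bp m.
Proof.
apply: coind_eq; rewrite coind_faceE ?coind_bp_deg //=.
by apply: functional_extensionality => g; apply: ms_face_bp.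
Qed.

Lemma coind_act_bp a n : a \in G -> coind_act a (coind_bp n) = coind_bp (pact a n).
Proof.
move=> _; apply: coind_eq; apply: functional_extensionality => g /=.
by rewrite pactM pmulV invgK.
Qed.

Definition coind : mss G :=
  @MSS k G coind_E coind_deg coind_bp coind_face coind_act coind_bp_deg
    coind_face_deg coind_act_deg coind_face_id coind_face_comp coind_act_one
    coind_act_mul coind_act_face coind_face_bp coind_act_bp.

Definition coind_unit_fun (x : A) g : A :=
  if g \in H then ms_act g^-1%g x else ms_bp A (pact g^-1%g (ms_deg x)).

Lemma coind_unit_family x : coind_family (coind_unit_fun x).
Proof.
rewrite /coind_unit_fun; split=> [g h hh | g].
- rewrite /pmul groupMl // -/(pmul g h); case: (boolP (g \in H)) => hg.
  + by rewrite -ms_act_mul ?groupV // pmulV.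
  + by rewrite ms_act_bp ?groupV // pactM pmulV.
- rewrite group1 invg1 ms_act_one; case: (boolP (g \in H)) => hg.
  + by rewrite ms_act_deg // groupV.
  + by rewrite ms_bp_deg.
Qed.
Definition coind_unit (x : A) : coind := exist _ _ (coind_unit_family x).

Lemma coind_unit_fun1 x : coind_unit_fun x 1 = x.
Proof. by rewrite /coind_unit_fun group1 invg1 ms_act_one. Qed.

Lemma coind_unit_hom : is_hom H coind_unit.
Proof.
split.
- by move=> x; rewrite /= /coind_deg /= coind_unit_fun1.
- move=> n m f x hx; apply: coind_eq.
  rewrite /= coind_faceE; last by rewrite /coind_deg /= coind_unit_fun1.
  apply: functional_extensionality => g; rewrite /= /coind_unit_fun.
  case: (boolP (g \in H)) => hg; first by rewrite ms_act_face ?groupV.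
  by rewrite (ms_face_deg _ hx) hx ms_face_bp.
- move=> a x ha; apply: coind_eq; apply: functional_extensionality => g.
  rewrite /= /coind_unit_fun /pmul groupMr ?groupV // -/(pmul _ _).
  case: (boolP (g \in H)) => hg.
  + by rewrite -ms_act_mul ?groupV // pmulV invgK.
  + by rewrite ms_act_deg // pactM pmulV invgK.
- move=> n; apply: coind_eq; apply: functional_extensionality => g.
  rewrite /= /coind_unit_fun ms_bp_deg.
  by case: (boolP (g \in H)) => hg //; rewrite ms_act_bp // groupV.
Qed.

End Coinduction.

Section KanExtension.
Variables (k : nat) (H G : {group 'S_k}).
Variables (A : mss H) (B : mss G) (eta : A -> B) (L : is_lan eta).
Let eta_hom : is_hom H eta := L.1.

Definition lan_image (y : B) : Prop :=
  exists p : 'S_k * A, p.1 \in G /\ y = ms_act p.1 (eta p.2).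

Lemma lan_image_face n m (f : Cmor n m) y :
  ms_deg y = n -> lan_image y -> lan_image (ms_face f y).
Proof.
move=> hy [[g x] /= [hg ey]]; subst y.
exists (g, ms_face (Cpact g^-1%g f) x); split=> //=.
by apply: (hom_face_act eta_hom) => //; rewrite -hy (hom_deg_act eta_hom) // pactK.
Qed.

Lemma lan_image_act a y : a \in G -> lan_image y -> lan_image (ms_act a y).
Proof.
move=> ha [[g x] /= [hg ->]]; exists (pmul a g, x).
by rewrite /= ms_act_mul // /pmul groupM.
Qed.

Lemma lan_image_eta x : lan_image (eta x).
Proof. by exists (1%g, x); rewrite /= group1 ms_act_one. Qed.

Lemma lan_image_bp n : lan_image (ms_bp B n).
Proof. by rewrite -(hom_bp eta_hom); apply: lan_image_eta. Qed.

(* The two inclusions of [B] into its double along the image of [eta] agree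
   on [eta], so uniqueness in the universal property identifies them. *)
Lemma lan_surj y : lan_image y.
Proof.
pose D := double lan_image_face lan_image_act.
have lower := dbl_lower_hom lan_image_face lan_image_act.
have upper := dbl_upper_hom lan_image_face lan_image_act lan_image_bp.
have eta_lower : is_hom H (fun x => dbl lan_image (eta x) false : D).
  split=> [x | n m f x hx | a x ha | n]; first exact: (hom_deg eta_hom).
  - by rewrite (hom_face eta_hom).
  - by rewrite (hom_act eta_hom).
  - by rewrite (hom_bp eta_hom).
have [chi [_ chi_unique]] := L.2 _ _ eta_lower.
apply: dbl_upper_lower; rewrite (chi_unique _ upper) ?(chi_unique _ lower) // => x.
by apply: dbl_eq => //; have /inSP -> := lan_image_eta x.
Qed.

Lemma lan_decomp y : exists g x, g \in G /\ y = ms_act g (eta x).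
Proof. by have [[g x] [hg e]] := lan_surj y; exists g, x. Qed.

(* Apply the universal map into the coinduced object and evaluate at [g1], [g]. *)
Lemma lan_inj g1 x1 g x : g1 \in G -> g \in G ->
  ms_act g1 (eta x1) = ms_act g (eta x) ->
  (exists2 h, h \in H & g1 = pmul g h /\ x1 = ms_act h^-1%g x) \/
  (exists n1 n2, x1 = ms_bp A n1 /\ x = ms_bp A n2).
Proof.
move=> hg1 hg e.
have [chi [[chi_hom chi_eta] _]] := L.2 (coind G A) _ (coind_unit_hom G A).
have E : coind_act g1 (coind_unit G x1) = coind_act g (coind_unit G x).
  have E0 : ms_act g1 (chi (eta x1)) = ms_act g (chi (eta x)).
    by rewrite -!(hom_act chi_hom) // e.
  by rewrite !chi_eta in E0.
have := f_equal (fun F : coind_E A => proj1_sig F g1) E.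
have := f_equal (fun F : coind_E A => proj1_sig F g) E.
rewrite /= !pmulVg !coind_unit_fun1 /coind_unit_fun => E2 E1.
case: (boolP (pmul g^-1%g g1 \in H)) => hh.
- left; exists (pmul g^-1%g g1) => //; split; first by rewrite pmulA pmulgV pmul1g.
  by rewrite E1 hh.
- right; have hh' : pmul g1^-1%g g \notin H by rewrite -groupV pmulV invgK.
  rewrite (negbTE hh) in E1; rewrite (negbTE hh') in E2.
  by exists (pact (pmul g^-1%g g1)^-1%g (ms_deg x)), (pact (pmul g1^-1%g g)^-1%g (ms_deg x1)).
Qed.

End KanExtension.

Section Comparison.
Variables (k : nat) (H G : {group 'S_k}) (hHG : H \subset G).
Variables (A : mss H) (B : mss G) (eta : A -> B) (L : is_lan eta).
Let eta_hom : is_hom H eta := L.1.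

Definition lan_dec (y : B) : 'S_k * A :=
  proj1_sig (constructive_indefinite_description _ (lan_surj L y)).

Lemma lan_decP y : (lan_dec y).1 \in G /\ y = ms_act (lan_dec y).1 (eta (lan_dec y).2).
Proof. by rewrite /lan_dec; case: constructive_indefinite_description. Qed.

(* [g eta(x), u] |-> [g, [x, g^-1 u]] on representatives; by [lan_inj] the
   choice of decomposition does not matter. *)
Definition theta_pair (t : B * coord k) : Smash G A :=
  scls G (lan_dec t.1).1 (rcls (lan_dec t.1).2 (pactU (lan_dec t.1).1^-1%g t.2)).

Lemma theta_pair_act_eta g x u : g \in G ->
  theta_pair (ms_act g (eta x), u) = scls G g (rcls x (pactU g^-1%g u)).
Proof.
move=> hg; rewrite /theta_pair /=.
have := lan_decP (ms_act g (eta x)); case: (lan_dec _) => g1 x1 /= [hg1 e].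
case: (lan_inj L hg1 hg (esym e)) => [[h hh [-> ->]] | [n1 [n2 [-> ->]]]].
- rewrite scls_H // realAct_rcls // -ms_act_mul ?groupV // pmulgV ms_act_one.
  by rewrite pactUM pmulV pmulA pmulgV pmul1g.
- by rewrite !rcls_bp !scls_base.
Qed.

Lemma theta_pair_bp n u : theta_pair (ms_bp B n, u) = smashBase G A.
Proof.
rewrite -(hom_bp eta_hom) -[eta _]ms_act_one theta_pair_act_eta ?group1 //.
by rewrite rcls_bp scls_base ?group1.
Qed.

Lemma theta_pair_resp t t' : realRel t t' -> theta_pair t = theta_pair t'.
Proof.
case=> [n m f y u hy hu | n m u v _ _ | y u hu]; last 2 first.
- by rewrite !theta_pair_bp.
- have [g [x [hg ey]]] := lan_decomp L y; subst y.
  rewrite theta_pair_bp theta_pair_act_eta // rcls_junk ?scls_base // => hs.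
  by apply: hu; rewrite (hom_deg_act eta_hom) // -(pactUKV g u); apply: simp_pactU.
have [g [x [hg ey]]] := lan_decomp L y; subst y.
have hx : ms_deg x = pact g^-1%g n by rewrite -hy (hom_deg_act eta_hom) // pactK.
rewrite (hom_face_act eta_hom) // !theta_pair_act_eta // pactU_cof rcls_face //.
exact: simp_pactU.
Qed.

Definition theta (q : Real B) : Smash G A := theta_pair (rep q).

Lemma theta_rcls y u : theta (rcls y u) = theta_pair (y, u).
Proof. exact: (resp_rep_cls theta_pair_resp). Qed.

Lemma theta_act_eta g x u : g \in G ->
  theta (rcls (ms_act g (eta x)) u) = scls G g (rcls x (pactU g^-1%g u)).
Proof. by move=> hg; rewrite theta_rcls theta_pair_act_eta. Qed.

Lemma theta_base : theta (realBase B) = smashBase G A.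
Proof. by rewrite /realBase theta_rcls theta_pair_bp. Qed.

Lemma theta_act a q : a \in G -> theta (realAct a q) = smashAct a (theta q).
Proof.
move=> ha; rewrite -(rcls_rep q); case: (rep q) => y u /=.
have [g [x [hg ->]]] := lan_decomp L y.
rewrite realAct_rcls // -ms_act_mul // theta_act_eta ?groupM //.
rewrite theta_act_eta // smashAct_scls //.
by rewrite pactUM pmulV -pmulA pmulVg pmulg1.
Qed.

Definition theta_inv_pair (p : 'S_k * Real A) : Real B :=
  if p.1 \in G then realAct p.1 (realMap eta p.2) else realBase B.

Lemma realAct_realMap_rcls g x u : g \in G ->
  realAct g (realMap eta (rcls x u)) = rcls (ms_act g (eta x)) (pactU g u).
Proof. by move=> hg; rewrite (realMap_rcls eta_hom) realAct_rcls. Qed.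

Lemma realAct_realMap_base g : g \in G -> realAct g (realMap eta (realBase A)) = realBase B.
Proof.
by move=> hg; rewrite realAct_realMap_rcls // (hom_bp eta_hom) ms_act_bp // rcls_bp.
Qed.

Lemma theta_inv_pair_resp p p' : smashRel G p p' -> theta_inv_pair p = theta_inv_pair p'.
Proof.
rewrite /theta_inv_pair; case=> [g h z hg hh | g g' hg hg' | g z hg] /=.
- have hhG : h \in G := subsetP hHG h hh.
  rewrite hg /pmul groupM // -/(pmul g h) -(rcls_rep z) realAct_rcls //.
  rewrite !realAct_realMap_rcls ?groupM //.
  by rewrite (hom_act eta_hom) // ms_act_mul // pactUM.
- by rewrite hg hg' !realAct_realMap_base.
- by rewrite (negbTE hg) group1 realAct_realMap_base.
Qed.

Definition theta_inv (s : Smash G A) : Real B := theta_inv_pair (rep s).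

Lemma theta_inv_scls g z : theta_inv (scls G g z) = theta_inv_pair (g, z).
Proof. exact: (resp_rep_cls theta_inv_pair_resp). Qed.

Lemma thetaK : cancel theta theta_inv.
Proof.
move=> q; rewrite -(rcls_rep q); case: (rep q) => y u /=.
have [g [x [hg ->]]] := lan_decomp L y.
rewrite theta_act_eta // theta_inv_scls /theta_inv_pair /= hg.
by rewrite realAct_realMap_rcls // pactUKV.
Qed.

Lemma theta_invK : cancel theta_inv theta.
Proof.
move=> s; rewrite -(scls_rep s); case: (rep s) => g z /=.
rewrite theta_inv_scls /theta_inv_pair /=; case: (boolP (g \in G)) => hg.
- by rewrite -(rcls_rep z) realAct_realMap_rcls // theta_act_eta // pactUK.
- by rewrite theta_base scls_junk.
Qed.

Lemma theta_continuous V : smashOpen V -> realOpen (fun q => V (theta q)).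
Proof.
move=> hV y; have [g [x [hg ->]]] := lan_decomp L y.
apply: (@simp_open_pact _ g (ms_deg x) _ (fun w => V (scls G g (rcls x w)))).
- exact: (hom_deg_act eta_hom).
- by move=> u; rewrite theta_act_eta.
- exact: hV.
Qed.

Lemma theta_open U : realOpen U -> smashOpen (fun s => exists q, U q /\ theta q = s).
Proof.
move=> hU g hg x.
apply: (@simp_open_pact _ g^-1%g (pact g (ms_deg x)) _
  (fun u => U (rcls (ms_act g (eta x)) u))).
- by rewrite pactK.
- move=> w; rewrite invgK; split.
  + move=> [q [Uq eq]]; move: Uq; rewrite -(thetaK q) eq theta_inv_scls.
    by rewrite /theta_inv_pair /= hg realAct_realMap_rcls.
  + move=> Uq; exists (rcls (ms_act g (eta x)) (pactU g w)).
    by rewrite theta_act_eta // pactUK.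
- by have := hU (ms_act g (eta x)); rewrite (hom_deg_act eta_hom).
Qed.

Lemma theta_based_G_iso : based_G_iso theta.
Proof.
split; [| exact: theta_continuous | exact: theta_open | exact: theta_base |].
- exact: Bijective thetaK theta_invK.
- by move=> a q; apply: theta_act.
Qed.

End Comparison.

Lemma theta_natural k (H G : {group 'S_k}) (A A' : mss H) (B B' : mss G)
    (eta : A -> B) (eta' : A' -> B') (L : is_lan eta) (L' : is_lan eta')
    (phi : A -> A') (chi : B -> B') :
  is_hom H phi -> is_hom G chi -> (forall x, chi (eta x) = eta' (phi x)) ->
  forall q, theta L' (realMap chi q) = smashMap phi (theta L q).
Proof.
move=> hphi hchi chi_eta q; rewrite -(rcls_rep q); case: (rep q) => y u /=.
have [g [x [hg ->]]] := lan_decomp L y.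
rewrite (realMap_rcls hchi) (hom_act hchi) // chi_eta.
by rewrite !theta_act_eta // smashMap_scls // (realMap_rcls hphi).
Qed.

Theorem proposition5p4 (k : nat) (H G : {group 'S_k}) (hHG : H \subset G) :
  exists theta : forall (A : mss H) (B : mss G) (eta : A -> B),
      is_lan eta -> Real B -> Smash G A,
    (forall A B eta (L : is_lan eta), based_G_iso (theta A B eta L)) /\
    (forall (A A' : mss H) (B B' : mss G) (eta : A -> B) (eta' : A' -> B')
       (L : is_lan eta) (L' : is_lan eta') (phi : A -> A') (chi : B -> B'),
       is_hom H phi -> is_hom G chi ->
       (forall x, chi (eta x) = eta' (phi x)) ->
       forall q, theta A' B' eta' L' (realMap chi q)
                 = smashMap phi (theta A B eta L q)).
Proof.
exists (fun A B eta L => theta L); split.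
- by move=> A B eta L; apply: theta_based_G_iso.
- by move=> *; apply: theta_natural.
Qed.
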